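(* Let $A$ be a real $n\times n$ matrix and let $J$ be an $n\times n$ Jordan form matrix similar to $A$. Fix a step size $h>0$, parameters $\psi=\psi(h)$, $\phi=\phi(h)$, an integer $s\ge 2$ and real constants $\alpha_2,\dots,\alpha_s$, $\theta_1,\dots,\theta_s$. For a matrix $M$ consider the following three difference schemes for $\mathbf{v}'=M\mathbf{v}$: (S1) $\dfrac{\mathbf{v}_{k+1}-\psi\mathbf{v}_k}{\phi}=M\mathbf{v}_k+\sum_{m=2}^{s}\alpha_m\phi^{m-1}M^m\mathbf{v}_k$; (S2) $\dfrac{\mathbf{v}_{k+1}-\psi\mathbf{v}_k}{\phi}=M\mathbf{v}_{k+1}+\sum_{m=2}^{s}\alpha_m\phi^{m-1}M^m\mathbf{v}_{k+1}$; (S3) $\dfrac{\mathbf{v}_{k+1}-\psi\mathbf{v}_k}{\phi}=M\big[\theta_1\mathbf{v}_k+(1-\theta_1)\mathbf{v}_{k+1}\big]+\sum_{m=2}^{s}\alpha_m\phi^{m-1}M^m\big[\theta_m\mathbf{v}_k+(1-\theta_m)\mathbf{v}_{k+1}\big]$. If one of these schemes, with $M=J$, is exact for the system $\mathbf{u}'=J\mathbf{u}$, then the same scheme with the same parameters and $M=A$ is exact for the system $\mathbf{x}'=A\mathbf{x}$.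
   Context: A one-step difference scheme with step size $h>0$ for an autonomous linear system $\mathbf{x}'=M\mathbf{x}$ generates, from an initial vector $\mathbf{x}_0$, a sequence $(\mathbf{x}_k)_{k\ge 0}$ (for implicit schemes it is assumed that $\mathbf{x}_{k+1}$ is uniquely determined by $\mathbf{x}_k$). The scheme is called exact if for every initial vector $\mathbf{x}_0$ the generated sequence satisfies $\mathbf{x}_k=\mathbf{x}(kh)$ for all $k\ge 0$, where $\mathbf{x}(t)$ is the solution of $\mathbf{x}'=M\mathbf{x}$ with $\mathbf{x}(0)=\mathbf{x}_0$. In the paper $\psi(h)=1+\mathcal{O}(h^2)$, $\phi(h)=h+\mathcal{O}(h^2)$. *)

From HB Require Import structures.
From mathcomp Require Import all_boot all_order all_algebra.
From mathcomp Require Import all_classical all_reals all_analysis.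
From mathcomp Require Import complex.
Set Implicit Arguments. Unset Strict Implicit. Unset Printing Implicit Defensive.
Import Order.TTheory GRing.Theory Num.Theory.
Import numFieldNormedType.Exports.
Local Open Scope ring_scope.

(* J is a Jordan form matrix: a block-diagonal matrix of Jordan blocks,
   written out entrywise: zero off the diagonal and superdiagonal,
   superdiagonal entries in {0,1}, and a superdiagonal 1 only joins
   equal diagonal entries (i.e. lies inside a Jordan block). *)
Definition jordan_form (K : fieldType) (n : nat) (J : 'M[K]_n) : Prop :=
  forall i j : 'I_n,
    [/\ (j != i :> nat) -> (j != i.+1 :> nat) -> J i j = 0,
        (j = i.+1 :> nat) -> J i j = 0 \/ J i j = 1
      & (j = i.+1 :> nat) -> J i j = 1 -> J i i = J j j].

Definition similar_RC (R : realType) (n : nat) (A : 'M[R]_n) (J : 'M[R[i]]_n)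
  : Prop :=
  exists P : 'M[R[i]]_n, P \in unitmx /\ map_mx (real_complex R) A = P *m J *m invmx P.

(* The three schemes, as a relation between v_k (v) and v_(k+1) (w). *)
Inductive scheme := S1 | S2 | S3.

Definition scheme_rel (K : fieldType) (n : nat) (sc : scheme) (M : 'M[K]_n)
  (psi phi : K) (s : nat) (alpha theta : nat -> K) (v w : 'cV[K]_n) : Prop :=
  let lhs := phi^-1 *: (w - psi *: v) in
  let S (u : nat -> 'cV[K]_n) :=
      \sum_(2 <= m < s.+1) (alpha m * phi ^+ (m.-1)) *: (M ^+ m *m u m) in
  match sc with
  | S1 => lhs = M *m v + S (fun _ => v)
  | S2 => lhs = M *m w + S (fun _ => w)
  | S3 => let mix m := theta m *: v + (1 - theta m) *: w in
          lhs = M *m mix 1%N + S mix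
  end.

Definition solves_R (R : realType) (n : nat) (M : 'M[R]_n) (x0 : 'cV[R]_n)
  (x : R -> 'cV[R]_n) : Prop :=
  x 0 = x0 /\
  forall (t : R) (i : 'I_n),
    derivable (fun u => x u i 0) t 1 /\
    'D_1 (fun u => x u i 0) t = (M *m x t) i 0.

Definition solves_C (R : realType) (n : nat) (M : 'M[R[i]]_n) (x0 : 'cV[R[i]]_n)
  (x : R -> 'cV[R[i]]_n) : Prop :=
  x 0 = x0 /\
  forall (t : R) (i : 'I_n),
    derivable (fun u => complex.Re (x u i 0)) t 1 /\
    'D_1 (fun u => complex.Re (x u i 0)) t = complex.Re ((M *m x t) i 0) /\
    derivable (fun u => complex.Im (x u i 0)) t 1 /\
    'D_1 (fun u => complex.Im (x u i 0)) t = complex.Im ((M *m x t) i 0).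

Definition exact_scheme (V T : Type) (h : T) (mulnT : nat -> T -> T)
  (step : V -> V -> Prop) (solves : V -> (T -> V) -> Prop) : Prop :=
  (forall v, exists! w, step v w) /\
  forall (x0 : V) (x : T -> V) (v : nat -> V),
    solves x0 x -> v 0%N = x0 -> (forall k, step (v k) (v k.+1)) ->
    forall k, v k = x (mulnT k h).

Definition exact_R (R : realType) (n : nat) (h : R) (sc : scheme) (M : 'M[R]_n)
  (psi phi : R) (s : nat) (alpha theta : nat -> R) : Prop :=
  exact_scheme h (fun k t => t *+ k) (scheme_rel sc M psi phi s alpha theta)
    (solves_R M).

Definition exact_C (R : realType) (n : nat) (h : R) (sc : scheme) (M : 'M[R[i]]_n)
  (psi phi : R) (s : nat) (alpha theta : nat -> R) : Prop :=
  exact_scheme h (fun k t => t *+ k)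
    (scheme_rel sc M (real_complex R psi) (real_complex R phi) s
       (fun m => real_complex R (alpha m)) (fun m => real_complex R (theta m)))
    (solves_C M).

From HB Require Import structures.
From mathcomp Require Import all_boot all_order all_algebra.
From mathcomp Require Import all_classical all_reals all_analysis.
From mathcomp Require Import complex.
From mathcomp Require Import lra.
Set Implicit Arguments. Unset Strict Implicit. Unset Printing Implicit Defensive.
Import Order.TTheory GRing.Theory Num.Theory.
Import numFieldNormedType.Exports.
Local Open Scope ring_scope.

(* Write A = P J P^-1 over the complex numbers. The map
   v |-> P^-1 v (on complexified vectors) intertwines A and J; since each
   scheme is built from linear operations and powers of the matrix, this map
   sends steps of the A-scheme exactly onto steps of the J-scheme, and real
   solutions of x' = A x onto solutions of u' = J u. Exactness of the
   J-scheme therefore pulls back to the A-scheme. The one point needing care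
   is that the unique complex successor of a real vector under the
   complexified A-scheme is real: its complex conjugate is a successor too,
   because A and all parameters are real. *)

Local Notation mxC := (map_mx (real_complex _)).

Section SchemeMap.
Variables (K1 K2 : fieldType) (n : nat) (f : {rmorphism K1 -> K2}).
Variables (T : 'cV[K1]_n -> 'cV[K2]_n) (M : 'M[K1]_n) (N : 'M[K2]_n).
Hypothesis T_add : {morph T : u v / u + v}.
Hypothesis T_scale : forall a u, T (a *: u) = f a *: T u.
Hypothesis T_mul : forall u, T (M *m u) = N *m T u.
Hypothesis T_inj : injective T.

Lemma scheme_rel_map sc psi phi s alpha theta v w :
  scheme_rel sc M psi phi s alpha theta v w <->
  scheme_rel sc N (f psi) (f phi) s (fun m => f (alpha m))
    (fun m => f (theta m)) (T v) (T w).
Proof.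
have T_pow m u : T (M ^+ m *m u) = N ^+ m *m T u.
  elim: m u => [|m IH] u; first by rewrite !expr0 !mul1mx.
  by rewrite !exprS -!mulmxE -!mulmxA T_mul IH.
have T0 : T 0 = 0 by rewrite -(scale0r 0) T_scale rmorph0 !scale0r.
have T_opp u : T (- u) = - T u by rewrite -scaleN1r T_scale rmorphN1 scaleN1r.
have T_sum (u : nat -> 'cV_n) u' : (forall m, T (u m) = u' m) ->
  T (\sum_(2 <= m < s.+1) (alpha m * phi ^+ m.-1) *: (M ^+ m *m u m)) =
  \sum_(2 <= m < s.+1) (f (alpha m) * f phi ^+ m.-1) *: (N ^+ m *m u' m).
  move=> Tu; rewrite (big_morph T T_add T0); apply: eq_bigr => m _.
  by rewrite T_scale T_pow Tu rmorphM rmorphXn.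
have T_lhs : T (phi^-1 *: (w - psi *: v)) = (f phi)^-1 *: (T w - f psi *: T v).
  by rewrite T_scale fmorphV T_add T_opp T_scale.
have T_mix m : T (theta m *: v + (1 - theta m) *: w) =
    f (theta m) *: T v + (1 - f (theta m)) *: T w.
  by rewrite T_add !T_scale rmorphB rmorph1.
have T_eq x y : x = y <-> T x = T y by split=> [->|/T_inj].
case: sc => /=; rewrite -T_lhs T_eq T_add T_mul.
- by rewrite (T_sum (fun=> v) (fun=> T v)).
- by rewrite (T_sum (fun=> w) (fun=> T w)).
- by rewrite T_mix (T_sum _ _ T_mix).
Qed.

End SchemeMap.

Lemma exact_scheme_pullback (V W Tm : Type) (h : Tm) (mulnT : nat -> Tm -> Tm)
    (stepV : V -> V -> Prop) (solV : V -> (Tm -> V) -> Prop)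
    (stepW : W -> W -> Prop) (solW : W -> (Tm -> W) -> Prop) (F : V -> W) :
  injective F ->
  (forall v w, stepV v w <-> stepW (F v) (F w)) ->
  (forall v w, stepW (F v) w -> exists v', w = F v') ->
  (forall x0 x, solV x0 x -> solW (F x0) (F \o x)) ->
  exact_scheme h mulnT stepW solW -> exact_scheme h mulnT stepV solV.
Proof.
move=> F_inj F_step F_closed F_sol [uniqW gridW]; split.
- move=> v; have [w [vw w_uniq]] := uniqW (F v).
  have [v' w_def] := F_closed _ _ vw; exists v'; split.
    by apply/F_step; rewrite -w_def.
  by move=> v'' /F_step /w_uniq; rewrite w_def => /F_inj.
- move=> x0 x v /F_sol solFx v0 vstep k; apply: F_inj.
  apply: (gridW _ _ (F \o v) solFx) => [|j]; first by rewrite /= v0.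
  exact/F_step.
Qed.

Lemma conjc_fixed_real (R : rcfType) m n (b : 'M[R[i]]_(m, n)) :
  map_mx conjc b = b -> b = mxC (map_mx (@complex.Re R) b).
Proof.
move=> /matrixP b_conj; apply/matrixP => i j; have := b_conj i j.
rewrite !mxE; case: (b i j) => x y [y_opp].
by congr (_ +i* _)%C; lra.
Qed.

Section ComplexifiedSolutions.
Variables (R : realType) (n : nat).

Lemma lincomb_derive (c : 'I_n -> R) (x : R -> 'cV[R]_n) (d : 'cV[R]_n) t :
  (forall j, derivable (fun u => x u j 0) t 1 /\
             'D_1 (fun u => x u j 0) t = d j 0) ->
  derivable (fun u => \sum_j c j * x u j 0) t 1 /\
  'D_1 (fun u => \sum_j c j * x u j 0) t = \sum_j c j * d j 0.
Proof.
move=> dx.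
have -> : (fun u => \sum_j c j * x u j 0) = \sum_j c j *: (fun u => x u j 0).
  by apply/funext => u; rewrite fct_sumE.
suff D : is_derive t 1 (\sum_j c j *: (fun u => x u j 0)) (\sum_j c j * d j 0).
  by split; [exact: ex_derive | exact: derive_val].
apply: is_derive_sum => j; have [xj_derivable <-] := dx j.
exact/is_deriveZ/derivableP.
Qed.

Lemma Re_mulmx_real (Q : 'M[R[i]]_n) (y : 'cV[R]_n) i :
  complex.Re ((Q *m mxC y) i 0) = \sum_j complex.Re (Q i j) * y j 0.
Proof.
rewrite mxE; elim/big_rec2: _ => // j r z _ <-.
by rewrite mxE; case: (Q i j) => p q; case: z => c e /=; rewrite mulr0 subr0.
Qed.

Lemma Im_mulmx_real (Q : 'M[R[i]]_n) (y : 'cV[R]_n) i :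
  complex.Im ((Q *m mxC y) i 0) = \sum_j complex.Im (Q i j) * y j 0.
Proof.
rewrite mxE; elim/big_rec2: _ => // j r z _ <-.
by rewrite mxE; case: (Q i j) => p q; case: z => c e /=; rewrite mulr0 add0r.
Qed.

Lemma solves_C_mulmx (A : 'M[R]_n) (N Q : 'M[R[i]]_n) x0 x :
  Q *m mxC A = N *m Q ->
  solves_R A x0 x -> solves_C N (Q *m mxC x0) (fun t => Q *m mxC (x t)).
Proof.
move=> QA [x_0 dx]; split=> [|t i]; first by rewrite x_0.
have -> : N *m (Q *m mxC (x t)) = Q *m mxC (A *m x t).
  by rewrite map_mxM !mulmxA QA.
have -> : (fun u => complex.Re ((Q *m mxC (x u)) i 0)) =
    fun u => \sum_j complex.Re (Q i j) * x u j 0.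
  by apply/funext => u; exact: Re_mulmx_real.
have -> : (fun u => complex.Im ((Q *m mxC (x u)) i 0)) =
    fun u => \sum_j complex.Im (Q i j) * x u j 0.
  by apply/funext => u; exact: Im_mulmx_real.
rewrite Re_mulmx_real Im_mulmx_real.
have [dRe DRe] := lincomb_derive (fun j => complex.Re (Q i j)) (dx t).
have [dIm DIm] := lincomb_derive (fun j => complex.Im (Q i j)) (dx t).
by do !split.
Qed.

End ComplexifiedSolutions.

Section Similarity.
Variables (R : realType) (n : nat) (A : 'M[R]_n) (J P : 'M[R[i]]_n).
Hypotheses (P_unit : P \in unitmx) (A_similar : mxC A = P *m J *m invmx P).
Variables (sc : scheme) (psi phi : R) (s : nat) (alpha theta : nat -> R).

Local Notation stepR M := (scheme_rel sc M psi phi s alpha theta).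
Local Notation stepC M := (scheme_rel sc M (real_complex R psi)
  (real_complex R phi) s (fun m => real_complex R (alpha m))
  (fun m => real_complex R (theta m))).

Definition jordan_coord (v : 'cV[R]_n) := invmx P *m mxC v.

Lemma invmx_similar : invmx P *m mxC A = J *m invmx P.
Proof. by rewrite A_similar !mulmxA mulVmx // mul1mx. Qed.

Lemma jordan_coord_inj : injective jordan_coord.
Proof.
move=> v w /(congr1 (mulmx P : _ -> 'cV_n)); rewrite !mulmxA mulmxV // !mul1mx.
exact: map_mx_inj.
Qed.

Lemma step_complexify v w : stepR A v w <-> stepC (mxC A) (mxC v) (mxC w).
Proof.
apply: scheme_rel_map; [exact: map_mxD | exact: map_mxZ | exact: map_mxM |].
exact: map_mx_inj.
Qed.

Lemma step_invmx a b : stepC (mxC A) a b <-> stepC J (invmx P *m a) (invmx P *m b).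
Proof.
apply: (scheme_rel_map (f := idfun)) => [u1 u2|c u|u|u1 u2 E].
- exact: mulmxDr.
- by rewrite scalemxAr.
- by rewrite !mulmxA invmx_similar.
- by rewrite -[u1]mul1mx -[u2]mul1mx -(mulmxV P_unit) -!mulmxA E.
Qed.

Lemma step_jordan_coord v w :
  stepR A v w <-> stepC J (jordan_coord v) (jordan_coord w).
Proof. exact: iff_trans (step_complexify v w) (step_invmx _ _). Qed.

Lemma step_conjc a b :
  stepC (mxC A) a b -> stepC (mxC A) (map_mx conjc a) (map_mx conjc b).
Proof.
pose conj : {rmorphism R[i] -> R[i]} := conjc.
have conj_real (r : R) : conj (real_complex R r) = real_complex R r.
  exact: conjc_real.
have conj_real_fun (g : nat -> R) :
    (fun m => conj (real_complex R (g m))) = fun m => real_complex R (g m).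
  by apply/funext => m; exact: conj_real.
have conj_A (u : 'cV_n) : map_mx conjc (mxC A *m u) = mxC A *m map_mx conjc u.
  rewrite map_mxM; congr (_ *m _).
  by apply/matrixP => i j; rewrite !mxE; exact: conjc_real.
rewrite (scheme_rel_map (f := conj) (T := map_mx conjc) (N := mxC A)).
- by rewrite !conj_real !conj_real_fun.
- exact: map_mxD.
- exact: map_mxZ.
- exact: conj_A.
- exact: map_mx_inj.
Qed.

Lemma jordan_step_closed :
  (forall u, exists! u', stepC J u u') ->
  forall v w, stepC J (jordan_coord v) w -> exists v', w = jordan_coord v'.
Proof.
move=> uniqJ v w vw.
have Aw : stepC (mxC A) (mxC v) (P *m w).
  by apply/step_invmx; rewrite mulKmx.
have conj_v : map_mx conjc (mxC v) = mxC v.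
  by apply/matrixP => i j; rewrite !mxE conjc_real.
have /step_invmx Aw' := step_conjc Aw; rewrite conj_v in Aw'.
have [w0 [_ w0_uniq]] := uniqJ (jordan_coord v).
have w_def : w = invmx P *m map_mx conjc (P *m w).
  by rewrite -(w0_uniq _ Aw') (w0_uniq _ vw).
have w_conj : map_mx conjc (P *m w) = P *m w.
  by rewrite {2}w_def mulKVmx.
exists (map_mx (@complex.Re R) (P *m w)).
by rewrite /jordan_coord -conjc_fixed_real // mulKmx.
Qed.

End Similarity.

Theorem theorem3 (R : realType) (n : nat) (A : 'M[R]_n) (J : 'M[R[i]]_n)
  (psi phi : R -> R) (h : R) (s : nat) (alpha theta : nat -> R) :
  jordan_form J -> similar_RC A J ->
  (fun t => psi t - 1) =O_ (at_right (0 : R)) (fun t => t ^+ 2) ->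
  (fun t => phi t - t) =O_ (at_right (0 : R)) (fun t => t ^+ 2) ->
  0 < h -> phi h != 0 -> (2 <= s)%N ->
  forall sc : scheme,
    exact_C h sc J (psi h) (phi h) s alpha theta ->
    exact_R h sc A (psi h) (phi h) s alpha theta.
Proof.
move=> _ [P [P_unit A_similar]] _ _ _ _ _ sc exJ.
have [uniqJ _] := exJ.
apply: (exact_scheme_pullback (F := jordan_coord P)) exJ.
- exact: jordan_coord_inj.
- exact: step_jordan_coord.
- exact: (jordan_step_closed P_unit A_similar uniqJ).
- by move=> x0 x; apply: solves_C_mulmx; rewrite (invmx_similar P_unit A_similar).
Qed.
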